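(* Let $S$ be a weakly cancellative $\mathrm{Cu}$-semigroup satisfying (O5) and (O6). Then $S$ satisfies (O8).
   Context: A $\mathrm{Cu}$-semigroup is a positively ordered abelian monoid $S$ such that: (O1) every increasing sequence has a supremum; (O2) every $x$ is the supremum of a $\ll$-increasing sequence; (O3) $x'\ll x$, $y'\ll y$ imply $x'+y'\ll x+y$; (O4) $\sup_n(x_n+y_n)=\sup_nx_n+\sup_ny_n$ for increasing sequences. Here $x\ll y$ means: for every increasing sequence $(y_k)$ with $y\le\sup_ky_k$ there is $k$ with $x\le y_k$. (O5): given $x+y\le z$, $x'\ll x$, $y'\ll y$, there is $c$ with $x'+c\le z\le x+c$ and $y'\ll c$. (O6): given $x'\ll x\le y+z$, there are $e,f$ with $x'\le e+f$, $e\le x,y$, $f\le x,z$. $S$ is weakly cancellative if $x+z\ll y+z$ implies $x\ll y$. (O8): for all $x',x,y',y,z,w$ with $2w=w$, $x+y\ll z+w$, $x'\ll x$, $y'\ll y$, there exist $z_1,z_2$ with $z_1+z_2\ll z$, $x'\ll z_1+w$, $y'\ll z_2+w$, $z_1\ll x+w$, $z_2\ll y+w$. *)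

Record PoMonoid := {
  carrier :> Type;
  add : carrier -> carrier -> carrier;
  zero : carrier;
  le : carrier -> carrier -> Prop
}.

Arguments add {_} _ _.
Arguments zero {_}.
Arguments le {_} _ _.

Section Defs.
Variable M : PoMonoid.

Definition is_po_abelian_monoid : Prop :=
  (forall x y z : M, add x (add y z) = add (add x y) z) /\
  (forall x y : M, add x y = add y x) /\
  (forall x : M, add x zero = x) /\
  (forall x : M, le x x) /\
  (forall x y z : M, le x y -> le y z -> le x z) /\
  (forall x y : M, le x y -> le y x -> x = y) /\
  (forall x y z : M, le x y -> le (add x z) (add y z)) /\
  (forall x : M, le zero x).

Definition increasing (f : nat -> M) : Prop := forall n, le (f n) (f (S n)).

Definition is_sup (f : nat -> M) (s : M) : Prop :=
  (forall n, le (f n) s) /\ (forall u, (forall n, le (f n) u) -> le s u).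

Definition way_below (x y : M) : Prop :=
  forall (g : nat -> M) (s : M), increasing g -> is_sup g s -> le y s ->
    exists k, le x (g k).

Definition O1 : Prop := forall f : nat -> M, increasing f -> exists s, is_sup f s.

Definition O2 : Prop :=
  forall x : M, exists f : nat -> M,
    (forall n, way_below (f n) (f (S n))) /\ is_sup f x.

Definition O3 : Prop :=
  forall x' x y' y : M, way_below x' x -> way_below y' y ->
    way_below (add x' y') (add x y).

Definition O4 : Prop :=
  forall (f g : nat -> M) (a b : M), increasing f -> increasing g ->
    is_sup f a -> is_sup g b -> is_sup (fun n => add (f n) (g n)) (add a b).

Definition CuSemigroup : Prop :=
  is_po_abelian_monoid /\ O1 /\ O2 /\ O3 /\ O4.

Definition O5 : Prop :=
  forall x y z x' y' : M, le (add x y) z -> way_below x' x -> way_below y' y ->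
    exists c : M, le (add x' c) z /\ le z (add x c) /\ way_below y' c.

Definition O6 : Prop :=
  forall x' x y z : M, way_below x' x -> le x (add y z) ->
    exists e f : M, le x' (add e f) /\ le e x /\ le e y /\ le f x /\ le f z.

Definition weakly_cancellative : Prop :=
  forall x y z : M, way_below (add x z) (add y z) -> way_below x y.

Definition O8 : Prop :=
  forall x' x y' y z w : M,
    add w w = w -> way_below (add x y) (add z w) ->
    way_below x' x -> way_below y' y ->
    exists z1 z2 : M,
      way_below (add z1 z2) z /\
      way_below x' (add z1 w) /\ way_below y' (add z2 w) /\
      way_below z1 (add x w) /\ way_below z2 (add y w).

End Defs.


(* Given x + y << z + w, x' << x and y' << y, the proof builds z1, z2 in two
   passes:
   - By (O4), x + y <= z' + w for some z' << z.
   - First component: (O6) applied to x <= z' + w yields e <= x, z' with a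
     good lower part of x below e + w; shrinking e to z1 << e and using (O5)
     gives c with z1 + c <= z' <= e + c.  Then y + x <= x + (c + w), and
     weak cancellation turns this into y <= c + w.
   - Second component: (O6) applied to y <= c + w yields z2 <= c, y with a
     good lower part of y below z2 + w; and z1 + z2 <= z1 + c <= z' << z. *)

Local Notation "x ≤ y" := (le x y) (at level 70).
Local Notation "x ≪ y" := (way_below _ x y) (at level 70).
Local Infix "⊕" := add (at level 50, left associativity).

Section PoMonoidFacts.
Context {M : PoMonoid} (HM : is_po_abelian_monoid M).

Lemma add_assoc (x y z : M) : x ⊕ (y ⊕ z) = x ⊕ y ⊕ z.
Proof. destruct HM as (Hassoc & _). apply Hassoc. Qed.

Lemma add_comm (x y : M) : x ⊕ y = y ⊕ x.
Proof. destruct HM as (_ & Hcomm & _). apply Hcomm. Qed.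

Lemma add_zero (x : M) : x ⊕ zero = x.
Proof. destruct HM as (_ & _ & Hzero & _). apply Hzero. Qed.

Lemma le_refl (x : M) : x ≤ x.
Proof. destruct HM as (_ & _ & _ & Hrefl & _). apply Hrefl. Qed.

Lemma le_trans (x y z : M) : x ≤ y -> y ≤ z -> x ≤ z.
Proof. destruct HM as (_ & _ & _ & _ & Htrans & _). apply Htrans. Qed.

Lemma le_zero (x : M) : zero ≤ x.
Proof. destruct HM as (_ & _ & _ & _ & _ & _ & _ & Hpos). apply Hpos. Qed.

Lemma le_add (a b c d : M) : a ≤ b -> c ≤ d -> a ⊕ c ≤ b ⊕ d.
Proof.
  intros Hab Hcd.
  assert (Hr : forall x y z : M, x ≤ y -> x ⊕ z ≤ y ⊕ z)
    by (destruct HM as (_ & _ & _ & _ & _ & _ & Hmon & _); exact Hmon).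
  apply le_trans with (b ⊕ c); [now apply Hr|].
  rewrite (add_comm b c), (add_comm b d). now apply Hr.
Qed.

Lemma le_add_r (a w : M) : a ≤ a ⊕ w.
Proof.
  apply le_trans with (a ⊕ zero); [rewrite add_zero; apply le_refl|].
  apply le_add; [apply le_refl | apply le_zero].
Qed.

Lemma const_increasing_sup (x : M) :
  increasing M (fun _ => x) /\ is_sup M (fun _ => x) x.
Proof.
  split; [intros n; apply le_refl|]. split; [intros n; apply le_refl|].
  intros u Hu. apply (Hu 0).
Qed.

Lemma way_below_le (a b : M) : a ≪ b -> a ≤ b.
Proof.
  intros Hab. destruct (const_increasing_sup b) as [Hi Hs].
  destruct (Hab _ _ Hi Hs (le_refl b)) as [k Hk]. exact Hk.
Qed.

Lemma le_way_below (a b c : M) : a ≤ b -> b ≪ c -> a ≪ c.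
Proof.
  intros Hab Hbc g s Hg Hs Hc. destruct (Hbc g s Hg Hs Hc) as [k Hk].
  exists k. now apply le_trans with b.
Qed.

Lemma way_below_le_trans (a b c : M) : a ≪ b -> b ≤ c -> a ≪ c.
Proof.
  intros Hab Hbc g s Hg Hs Hc. apply (Hab g s Hg Hs). now apply le_trans with c.
Qed.

Lemma zero_way_below_zero : (zero : M) ≪ zero.
Proof. intros g s _ _ _. exists 0. apply le_zero. Qed.

End PoMonoidFacts.

Section CuFacts.
Context {M : PoMonoid} (HM : is_po_abelian_monoid M).

Lemma approximation (HO2 : O2 M) (x : M) :
  exists f : nat -> M,
    (forall n, f n ≪ x) /\ increasing M f /\ is_sup M f x.
Proof.
  destruct (HO2 x) as [f [Hf Hs]]. exists f. split; [|split].
  - intros n. apply (way_below_le_trans HM) with (f (S n));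
      [apply Hf | apply (proj1 Hs)].
  - intros n. apply (way_below_le HM), Hf.
  - exact Hs.
Qed.

Lemma interpolation (HO2 : O2 M) (a b : M) :
  a ≪ b -> exists c, a ≪ c /\ c ≪ b.
Proof.
  intros Hab. destruct (HO2 b) as [f [Hf Hs]].
  assert (Hi : increasing M f) by (intros n; apply (way_below_le HM), Hf).
  destruct (Hab f b Hi Hs (le_refl HM b)) as [k Hk].
  exists (f (S k)). split.
  - apply (le_way_below HM) with (f k); [exact Hk | apply Hf].
  - apply (way_below_le_trans HM) with (f (S (S k))); [apply Hf | apply (proj1 Hs)].
Qed.

(* Something way below z + w already lies below z' + w for some z' << z:
   approximate z from below and use (O4) to add w to the approximants. *)
Lemma way_below_sum (HO2 : O2 M) (HO4 : O4 M) (a z w : M) :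
  a ≪ z ⊕ w -> exists z', z' ≪ z /\ a ≤ z' ⊕ w.
Proof.
  intros Ha. destruct (approximation HO2 z) as [f [Hf [Hi Hs]]].
  destruct (const_increasing_sup HM w) as [Hwi Hws].
  assert (Hi' : increasing M (fun n => f n ⊕ w))
    by (intros n; apply (le_add HM); [apply Hi | apply (le_refl HM)]).
  destruct (Ha _ _ Hi' (HO4 _ _ _ _ Hi Hwi Hs Hws) (le_refl HM _)) as [k Hk].
  now exists (f k).
Qed.

(* Weak cancellation against an element way below: if y + x <= t + x3 with
   x3 << x, then y <= t.  Each approximant f of y satisfies
   f + x3 << y + x <= t + x3 by (O3), hence f << t. *)
Lemma cancel_way_below (HO2 : O2 M) (HO3 : O3 M) (Hwc : weakly_cancellative M)
    (y x t x3 : M) :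
  y ⊕ x ≤ t ⊕ x3 -> x3 ≪ x -> y ≤ t.
Proof.
  intros Hle Hx. destruct (approximation HO2 y) as [f [Hf [_ Hs]]].
  apply (proj2 Hs). intros n. apply (way_below_le HM), (Hwc (f n) t x3).
  apply (way_below_le_trans HM) with (y ⊕ x); [now apply HO3 | exact Hle].
Qed.

Lemma complement (HO5 : O5 M) (x' x z : M) :
  x' ≪ x -> x ≤ z -> exists c, x' ⊕ c ≤ z /\ z ≤ x ⊕ c.
Proof.
  intros Hx' Hxz.
  destruct (HO5 x zero z x' zero) as (c & Hc1 & Hc2 & _).
  - now rewrite (add_zero HM).
  - exact Hx'.
  - apply (zero_way_below_zero HM).
  - now exists c.
Qed.

Lemma decomposition (HO6 : O6 M) (x' x y z : M) :
  x' ≪ x -> x ≤ y ⊕ z -> exists e, e ≤ x /\ e ≤ y /\ x' ≤ e ⊕ z.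
Proof.
  intros Hx' Hle. destruct (HO6 _ _ _ _ Hx' Hle) as (e & f & Hef & He1 & He2 & _ & Hf).
  exists e. split; [exact He1|]. split; [exact He2|].
  apply (le_trans HM) with (e ⊕ f); [exact Hef|].
  apply (le_add HM); [apply (le_refl HM) | exact Hf].
Qed.

Lemma first_component (HO2 : O2 M) (HO3 : O3 M) (HO4 : O4 M) (HO5 : O5 M)
    (HO6 : O6 M) (Hwc : weakly_cancellative M) (x1 x y z' w : M) :
  x1 ≪ x -> x ⊕ y ≤ z' ⊕ w ->
  exists z1 c, z1 ≪ x /\ z1 ⊕ c ≤ z' /\ x1 ≤ z1 ⊕ w /\ y ≤ c ⊕ w.
Proof.
  intros Hx1 Hle.
  destruct (interpolation HO2 _ _ Hx1) as [x2 [Hx12 Hx2]].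
  destruct (interpolation HO2 _ _ Hx2) as [x3 [Hx23 Hx3]].
  assert (Hx3z : x3 ≤ z' ⊕ w).
  { apply (le_trans HM) with (x ⊕ y); [|exact Hle].
    apply (le_trans HM) with x; [now apply (way_below_le HM) | apply (le_add_r HM)]. }
  destruct (decomposition HO6 _ _ _ _ Hx23 Hx3z) as (e & Hex3 & Hez & Hx2e).
  destruct (way_below_sum HO2 HO4 x1 e w) as [z1 [Hz1e Hx1z1]].
  { now apply (way_below_le_trans HM) with x2. }
  destruct (complement HO5 _ _ _ Hz1e Hez) as (c & Hz1c & Hzec).
  exists z1, c. split; [|split; [exact Hz1c|split; [exact Hx1z1|]]].
  - apply (le_way_below HM) with x3; [|exact Hx3].
    apply (le_trans HM) with e; [now apply (way_below_le HM) | exact Hex3].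
  - (* y + x <= z' + w <= e + c + w <= (c + w) + x3, then cancel x3 << x *)
    apply (cancel_way_below HO2 HO3 Hwc y x (c ⊕ w) x3); [|exact Hx3].
    rewrite (add_comm HM y x). apply (le_trans HM) with (z' ⊕ w); [exact Hle|].
    apply (le_trans HM) with (e ⊕ c ⊕ w).
    + apply (le_add HM); [exact Hzec | apply (le_refl HM)].
    + rewrite (add_comm HM (c ⊕ w) x3), <- (add_assoc HM e c w).
      apply (le_add HM); [exact Hex3 | apply (le_refl HM)].
Qed.

End CuFacts.

Theorem mainTheorem15 (S : PoMonoid) :
  CuSemigroup S -> weakly_cancellative S -> O5 S -> O6 S -> O8 S.
Proof.
  intros [HM [_ [HO2 [HO3 HO4]]]] Hwc HO5 HO6.
  intros x' x y' y z w _ Hxy Hx' Hy'.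
  destruct (way_below_sum HM HO2 HO4 _ _ _ Hxy) as [z' [Hz' Hle]].
  destruct (interpolation HM HO2 _ _ Hx') as [x1 [Hx'1 Hx1]].
  destruct (first_component HM HO2 HO3 HO4 HO5 HO6 Hwc _ _ _ _ _ Hx1 Hle)
    as (z1 & c & Hz1 & Hz1c & Hx1z1 & Hyc).
  destruct (interpolation HM HO2 _ _ Hy') as [y1 [Hy'1 Hy1]].
  destruct (interpolation HM HO2 _ _ Hy1) as [y2 [Hy12 Hy2]].
  assert (Hy2c : y2 ≤ c ⊕ w)
    by (apply (le_trans HM) with y; [now apply (way_below_le HM) | exact Hyc]).
  destruct (decomposition HM HO6 _ _ _ _ Hy12 Hy2c) as (z2 & Hz2y2 & Hz2c & Hy1z2).
  exists z1, z2. split; [|split; [|split; [|split]]].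
  - apply (le_way_below HM) with z'; [|exact Hz'].
    apply (le_trans HM) with (z1 ⊕ c); [|exact Hz1c].
    apply (le_add HM); [apply (le_refl HM) | exact Hz2c].
  - now apply (way_below_le_trans HM) with x1.
  - now apply (way_below_le_trans HM) with y1.
  - apply (way_below_le_trans HM) with x; [exact Hz1 | apply (le_add_r HM)].
  - apply (le_way_below HM) with y2; [exact Hz2y2|].
    apply (way_below_le_trans HM) with y; [exact Hy2 | apply (le_add_r HM)].
Qed.
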